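(* Place the almost positive roots of type $C_n$ in the off-diagonal entries of an $(n+1)\times(n+1)$ array via the bijection: entry $(1,j)$ ($2\le j\le n+1$) is $-\alpha_{j-1}$; entry $(i,j)$ with $2\le i<j$ is $\varepsilon_{i-1}-\varepsilon_{j-1}$; entry $(i,j)$ with $i>j$ is $\varepsilon_j+\varepsilon_{i-1}$. Two almost positive roots $\alpha,\beta$ are $\underline c$-compatible if and only if their locations satisfy one of: (i) they lie in the same row or the same column; (ii) for some $k<m$, $i<j$ with $k,m,i,j$ pairwise distinct, they lie in entries $(k,i)$ and $(m,j)$, and either $k<i<m$ or $i<k<m<j$; (iii) for some $k<m$, $i<j$ with $k,m,i,j$ pairwise distinct, they lie in entries $(m,i)$ and $(k,j)$, and either ($k<i$ and $m<i$) or $i<k<j<m$ or $k>j$.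
   Context: Type $C_n$: standard basis $\varepsilon_i$ of $\mathbb{R}^n$, simple roots $\alpha_i=\varepsilon_i-\varepsilon_{i+1}$ ($i<n$), $\alpha_n=2\varepsilon_n$, $\Pi$ the simple roots, $\Phi_+=\{\varepsilon_i\pm\varepsilon_j:i<j\}\cup\{2\varepsilon_i\}$, $\Phi_{\ge-1}=\Phi_+\sqcup(-\Pi)$. With simple reflections $s_i$ and $c=s_1\cdots s_n$, $\tau:\Phi_{\ge-1}\to\Phi_{\ge-1}$ is $\tau(-\alpha_i)=s_1\cdots s_{i-1}(\alpha_i)$, $\tau(s_n\cdots s_{i+1}(\alpha_i))=-\alpha_i$, $\tau(\alpha)=c(\alpha)$ otherwise. The $\underline c$-compatibility degree $(-\|_{\underline c}-)$ is the unique $\tau$-invariant function $\Phi_{\ge-1}^2\to\mathbb{Z}$ with $(-\alpha\|_{\underline c}-\alpha')=0$ for $\alpha,\alpha'\in\Pi$ and $(-\alpha\|_{\underline c}\beta)=[\beta:\alpha]$ (coefficient of $\alpha$ in $\beta$) for $\alpha\in\Pi,\beta\in\Phi_+$; $\gamma,\gamma'$ are $\underline c$-compatible if $(\gamma\|_{\underline c}\gamma')=0$. *)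

(* Type C_n root system realised in Z^n, indices 0-based:
   math index i (1..n) corresponds to nat i-1 here. *)
From HB Require Import structures.
From mathcomp Require Import all_boot all_order all_algebra.
Import GRing.Theory Num.Theory.
Local Open Scope ring_scope.

Definition vec (n : nat) := {ffun 'I_n -> int}.

Definition eps (n i : nat) : vec n := [ffun k : 'I_n => ((((k : nat) == i) : nat)%:R : int)].

Definition alpha (n i : nat) : vec n :=
  if (i.+1 < n)%N then eps n i - eps n i.+1 else eps n i *+ 2.

Definition dot (n : nat) (u v : vec n) : int := \sum_(k < n) u k * v k.

Definition refl (n : nat) (a v : vec n) : vec n :=
  v - a *~ ((2 * dot n v a) %/ dot n a a)%Z.

Definition srefl (n i : nat) (v : vec n) : vec n := refl n (alpha n i) v.

Definition prodS (n : nat) (l : seq nat) (v : vec n) : vec n :=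
  foldr (fun i w => srefl n i w) v l.

Definition cox (n : nat) (v : vec n) : vec n := prodS n (iota 0 n) v.

Definition posroot (n : nat) (v : vec n) : bool :=
  [exists i : 'I_n, exists j : 'I_n,
     (i < j)%N && ((v == eps n i - eps n j) || (v == eps n i + eps n j))]
  || [exists i : 'I_n, v == eps n i *+ 2].

Definition negsimple (n : nat) (v : vec n) : bool :=
  [exists i : 'I_n, v == - alpha n i].

Definition almpos (n : nat) (v : vec n) : bool := posroot n v || negsimple n v.

Definition tau_neg_image (n i : nat) : vec n := prodS n (iota 0 i) (alpha n i).
Definition tau_neg_preimage (n i : nat) : vec n :=
  prodS n (rev (iota i.+1 (n - i.+1))) (alpha n i).

Definition tau (n : nat) (v : vec n) : vec n :=
  match [pick i : 'I_n | v == - alpha n i] with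
  | Some i => tau_neg_image n i
  | None =>
    match [pick i : 'I_n | v == tau_neg_preimage n i] with
    | Some i => - alpha n i
    | None => cox n v
    end
  end.

(* f is "the" c-compatibility degree: the tau-invariant function on
   Phi_{>=-1}^2 with the prescribed values on pairs with a negative simple
   first argument. *)
Definition is_compat_degree (n : nat) (f : vec n -> vec n -> int) : Prop :=
  [/\ (forall a b, almpos n a -> almpos n b -> f (tau n a) (tau n b) = f a b),
      (forall i j : 'I_n, f (- alpha n i) (- alpha n j) = 0) &
      (forall (i : 'I_n) (b : vec n) (c : 'I_n -> int),
          posroot n b -> b = \sum_(k < n) alpha n k *~ c k ->
          f (- alpha n i) b = c i)].

(* root placed in entry (r, c) (1-based, r <> c, 1 <= r, c <= n+1) of the array *)
Definition entry (n r c : nat) : vec n :=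
  if r == 1%N then - alpha n (c - 2)
  else if (r < c)%N then eps n (r - 2) - eps n (c - 2)
  else eps n (c - 1) + eps n (r - 2).

Definition valid_pos (n r c : nat) : Prop :=
  [/\ (1 <= r <= n.+1)%N, (1 <= c <= n.+1)%N & r <> c].

Definition distinct4 (a b c d : nat) : Prop :=
  a <> b /\ a <> c /\ a <> d /\ b <> c /\ b <> d /\ c <> d.

Definition pos_pair (r1 c1 r2 c2 x1 y1 x2 y2 : nat) : Prop :=
  (r1 = x1 /\ c1 = y1 /\ r2 = x2 /\ c2 = y2) \/
  (r1 = x2 /\ c1 = y2 /\ r2 = x1 /\ c2 = y1).

Definition cond_i (r1 c1 r2 c2 : nat) : Prop := r1 = r2 \/ c1 = c2.

Definition cond_ii (r1 c1 r2 c2 : nat) : Prop :=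
  exists k m i j : nat, [/\ (k < m)%N, (i < j)%N, distinct4 k m i j,
    pos_pair r1 c1 r2 c2 k i m j &
    ((k < i < m)%N \/ (i < k < m)%N /\ (m < j)%N)].

Definition cond_iii (r1 c1 r2 c2 : nat) : Prop :=
  exists k m i j : nat, [/\ (k < m)%N, (i < j)%N, distinct4 k m i j,
    pos_pair r1 c1 r2 c2 m i k j &
    [\/ (k < i)%N /\ (m < i)%N, (i < k < j)%N /\ (j < m)%N | (j < k)%N]].

From mathcomp Require Import all_boot all_order all_algebra.
From mathcomp Require Import zify.
Import GRing.Theory Num.Theory.
Local Open Scope ring_scope.

(* In coordinates a simple reflection swaps two adjacent coordinates or changes
   the sign of the last one, so tau can be computed on the array: it sends the
   entry (r, c) to (r + 1, c + 1), indices being read cyclically in 1..n+1.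
   Conditions (i)-(iii) say that the two entries share a row or a column, or
   that their four indices occur around this circle in one of three cyclic
   orders, which is invariant under the rotation.  By tau-invariance of the
   compatibility degree we may thus rotate the first entry into row 1, where it
   is a negative simple root -alpha_i and the degree is the coefficient of
   alpha_i in the second root. *)

(* Comparisons are split with ltngtP rather than eqP: lia handles strict
   inequalities much better than disequalities. *)
Ltac split_if :=
  match goal with
  | |- context [if ?b then _ else _] =>
    lazymatch b with
    | context [if _ then _ else _] => fail
    | (?x == ?y)%N => case: (ltngtP x y) => [?|?|?]; try subst
    | _ => case: ifP => ?
    end
  end.
Ltac case_lia :=
  first [ rewrite ?addnS ?addSn ?subn1 ?subSS ?subn0 ?addn0 ?add0n /=; lia
        | split_if; case_lia ].

Definition vec_of (n : nat) (g : nat -> int) : vec n := [ffun k : 'I_n => g (k : nat)].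

Definition kron (k i : nat) : int := if k == i then 1 else 0.

Definition alpha_coord (n i k : nat) : int :=
  if (i.+1 < n)%N then kron k i - kron k i.+1 else kron k i *+ 2.

Definition swap_at (i : nat) (g : nat -> int) (k : nat) : int :=
  if k == i then g i.+1 else if k == i.+1 then g i else g k.

Definition negate_at (i : nat) (g : nat -> int) (k : nat) : int :=
  if k == i then - g k else g k.

Definition cycle_up (j m : nat) (g : nat -> int) (k : nat) : int :=
  if (k < j)%N then g k else if k == j then g (j + m)%N
  else if (k <= j + m)%N then g k.-1 else g k.

Definition cycle_down (j m : nat) (g : nat -> int) (k : nat) : int :=
  if (k < j)%N then g k else if (k < j + m)%N then g k.+1
  else if k == (j + m)%N then g j else g k.

Section Coordinates.
Variable n : nat.
Implicit Types (g : nat -> int) (i j k m : nat).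

Lemma vec_ofE g (k : 'I_n) : vec_of n g k = g k.
Proof. by rewrite ffunE. Qed.

Lemma eq_vec_of g1 g2 : (forall k, (k < n)%N -> g1 k = g2 k) -> vec_of n g1 = vec_of n g2.
Proof. by move=> eq_g; apply/ffunP => k; rewrite !vec_ofE eq_g. Qed.

Lemma vec_of_inj g1 g2 k : vec_of n g1 = vec_of n g2 -> (k < n)%N -> g1 k = g2 k.
Proof. by move=> eq_v lt_kn; rewrite -(vec_ofE g1 (Ordinal lt_kn)) eq_v vec_ofE. Qed.

Lemma vec_ofD g1 g2 : vec_of n g1 + vec_of n g2 = vec_of n (fun k => g1 k + g2 k).
Proof. by apply/ffunP => k; rewrite !ffunE. Qed.

Lemma vec_ofN g : - vec_of n g = vec_of n (fun k => - g k).
Proof. by apply/ffunP => k; rewrite !ffunE. Qed.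

Lemma vec_ofMn g m : vec_of n g *+ m = vec_of n (fun k => g k *+ m).
Proof. by apply/ffunP => k; rewrite ffunMnE !ffunE. Qed.

Lemma vec_ofMz g z : vec_of n g *~ z = vec_of n (fun k => g k * z).
Proof. by apply/ffunP => k; rewrite ffunMzE !ffunE mulrzz. Qed.

Lemma epsE i : eps n i = vec_of n (kron^~ i).
Proof. by apply/ffunP => k; rewrite !ffunE /kron; case: eqP. Qed.

Lemma alphaE i : alpha n i = vec_of n (alpha_coord n i).
Proof.
by rewrite /alpha /alpha_coord; case: ifP => _; rewrite !epsE ?vec_ofN ?vec_ofD ?vec_ofMn.
Qed.

Lemma dot_vec_of g h : dot n (vec_of n g) (vec_of n h) = \sum_(k < n) g k * h k.
Proof. by apply: eq_bigr => k _; rewrite !vec_ofE. Qed.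

Lemma sum_kron g i : (i < n)%N -> \sum_(k < n) g k * kron k i = g i.
Proof.
move=> lt_in; rewrite (bigD1 (Ordinal lt_in)) //= big1 ?addr0 /kron ?eqxx ?mulr1 // => k ne_k.
case: eqP => [eq_ki|_]; last by rewrite mulr0.
by case/eqP: ne_k; apply: val_inj.
Qed.

Lemma sum_kronB g i j : (i < n)%N -> (j < n)%N ->
  \sum_(k < n) g k * (kron k i - kron k j) = g i - g j.
Proof.
move=> lt_in lt_jn; rewrite -(sum_kron g i lt_in) -(sum_kron g j lt_jn) -sumrB.
by apply: eq_bigr => k _; rewrite mulrBr.
Qed.

Lemma srefl_swap i g : (i.+1 < n)%N -> srefl n i (vec_of n g) = vec_of n (swap_at i g).
Proof.
move=> lt_i1n; have lt_in := ltnW lt_i1n.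
have alpha_coordE k : alpha_coord n i k = kron k i - kron k i.+1 by rewrite /alpha_coord lt_i1n.
rewrite /srefl /refl alphaE !dot_vec_of.
have -> : \sum_(k < n) g k * alpha_coord n i k = g i - g i.+1.
  by under eq_bigr do rewrite alpha_coordE; rewrite sum_kronB.
have -> : \sum_(k < n) alpha_coord n i k * alpha_coord n i k = 2.
  under eq_bigr do rewrite [in X in _ * X]alpha_coordE.
  by rewrite sum_kronB // !alpha_coordE /kron; case_lia.
rewrite mulKz // vec_ofMz vec_ofN vec_ofD; apply: eq_vec_of => k _.
by rewrite /swap_at alpha_coordE /kron; case_lia.
Qed.

Lemma srefl_last i g : i.+1 = n -> srefl n i (vec_of n g) = vec_of n (negate_at i g).
Proof.
move=> i1n; have lt_in : (i < n)%N by rewrite -i1n.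
have alpha_coordE k : alpha_coord n i k = kron k i *+ 2 by rewrite /alpha_coord i1n ltnn.
rewrite /srefl /refl alphaE !dot_vec_of.
have -> : \sum_(k < n) g k * alpha_coord n i k = g i * 2.
  rewrite -(sum_kron (fun k => g k * 2) i lt_in).
  by apply: eq_bigr => k _; rewrite alpha_coordE /kron; case_lia.
have -> : \sum_(k < n) alpha_coord n i k * alpha_coord n i k = 4.
  rewrite -[4](sum_kron (fun=> 4) i lt_in).
  by apply: eq_bigr => k _; rewrite !alpha_coordE /kron; case_lia.
rewrite (_ : 2 * (g i * 2) = g i * 4) ?mulzK //; last by lia.
rewrite vec_ofMz vec_ofN vec_ofD; apply: eq_vec_of => k _.
by rewrite /negate_at alpha_coordE /kron; case_lia.
Qed.

Lemma prodS_iota j m g : (j + m < n)%N ->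
  prodS n (iota j m) (vec_of n g) = vec_of n (cycle_up j m g).
Proof.
elim: m j => [|m IH] j lt_jmn.
  by apply: eq_vec_of => k _; rewrite /cycle_up; case_lia.
rewrite /= -/(prodS n (iota j.+1 m) (vec_of n g)) IH; last by lia.
rewrite srefl_swap; last by lia.
by apply: eq_vec_of => k _; rewrite /cycle_up /swap_at; case_lia.
Qed.

Lemma prodS_rev_iota j m g : (j + m < n)%N ->
  prodS n (rev (iota j m)) (vec_of n g) = vec_of n (cycle_down j m g).
Proof.
elim: m j g => [|m IH] j g lt_jmn.
  by apply: eq_vec_of => k _; rewrite /cycle_down; case_lia.
rewrite /= rev_cons /prodS foldr_rcons -/(prodS n _ _) srefl_swap; last by lia.
rewrite IH; last by lia.
by apply: eq_vec_of => k _; rewrite /cycle_down /swap_at; case_lia.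
Qed.

Lemma cox_vec_of g : (0 < n)%N ->
  cox n (vec_of n g) = vec_of n (fun k => if k == 0%N then - g n.-1 else g k.-1).
Proof.
move=> n_gt0; have iota_split : iota 0 n = iota 0 n.-1 ++ [:: n.-1].
  by rewrite -{1}(prednK n_gt0) -addn1 iotaD.
rewrite /cox iota_split /prodS foldr_cat -/(prodS _ _ _) /= srefl_last; last by lia.
rewrite -/(prodS _ _ _) prodS_iota; last by lia.
by apply: eq_vec_of => k lt_kn; rewrite /cycle_up /negate_at; case_lia.
Qed.
End Coordinates.

Arguments vec_of_inj {n g1 g2} k.

Definition cyclic3 (a b c : nat) : bool := [|| (a < b < c)%N, (b < c < a)%N | (c < a < b)%N].

Definition cyclic4 (a b c d : nat) : bool := cyclic3 a b c && cyclic3 a c d.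

Definition compat_cyclic (r1 c1 r2 c2 : nat) : bool :=
  [|| r1 == r2, c1 == c2, cyclic4 r1 c1 r2 c2, cyclic4 r1 c1 c2 r2 | cyclic4 r1 r2 c2 c1].

Lemma or3_of_or (A B C : Prop) : A \/ B \/ C -> [\/ A, B | C].
Proof. by case=> [|[]]; [constructor 1 | constructor 2 | constructor 3]. Qed.

Lemma conds_compat_cyclic r1 c1 r2 c2 :
  cond_i r1 c1 r2 c2 \/ cond_ii r1 c1 r2 c2 \/ cond_iii r1 c1 r2 c2 <->
  compat_cyclic r1 c1 r2 c2.
Proof.
rewrite /compat_cyclic /cyclic4 /cyclic3.
split=> [[[->|->]|[]]|]; rewrite ?eqxx ?orbT //.
1,2: case=> k [m [i [j [lt_km lt_ij [_ [_ [_ [_ [ne_mj _]]]]] pos ord]]]].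
1,2: by case: ord => ord; case: pos => [[? [? [? ?]]]|[? [? [? ?]]]]; subst; lia.
case: (ltngtP r1 r2) => [lt_r|lt_r|->]; last by left; left.
all: case: (ltngtP c1 c2) => [lt_c|lt_c|->] compat; last by left; right.
- right; left; exists r1, r2, c1, c2.
  by split; [lia | lia | rewrite /distinct4; lia | left | lia].
- right; right; exists r1, r2, c2, c1.
  by split; [lia | lia | rewrite /distinct4; lia | right | apply: or3_of_or; lia].
- right; right; exists r2, r1, c1, c2.
  by split; [lia | lia | rewrite /distinct4; lia | left | apply: or3_of_or; lia].
- right; left; exists r2, r1, c2, c1.
  by split; [lia | lia | rewrite /distinct4; lia | right | lia].
Qed.

Definition entry_coord (n r c k : nat) : int :=
  if r == 1%N then - alpha_coord n (c - 2) k
  else if (r < c)%N then kron k (r - 2) - kron k (c - 2)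
  else kron k (c - 1) + kron k (r - 2).

Definition cyc_succ (n x : nat) : nat := if x == n.+1 then 1%N else x.+1.

(* With 0-based indices, eps_a = alpha_a + ... + alpha_(n-2) + alpha_(n-1) / 2. *)
Definition entry_coef (n r c k : nat) : int :=
  if (r < c)%N then (if (r - 2 <= k < c - 2)%N then 1 else 0)
  else (if (c - 1 <= k < n.-1)%N then 1 else 0) + (if (r - 2 <= k < n.-1)%N then 1 else 0)
       + (if k == n.-1 then 1 else 0).

Section ArrayEntries.
Variable n : nat.

Lemma cyc_succE x : (x <= n)%N -> cyc_succ n x = x.+1.
Proof. by move=> le_xn; rewrite /cyc_succ ifN // neq_ltn ltnS le_xn. Qed.

Lemma cyc_succ_last : cyc_succ n n.+1 = 1%N.
Proof. by rewrite /cyc_succ eqxx. Qed.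

Lemma eq_cyc_succ a b : (0 < a <= n.+1)%N -> (0 < b <= n.+1)%N ->
  (cyc_succ n a == cyc_succ n b) = (a == b).
Proof.
move=> ? ?; rewrite /cyc_succ.
by case: (a =P n.+1); case: (b =P n.+1) => ? ?; apply/eqP/eqP; lia.
Qed.

Lemma cyclic3_succ a b c : (0 < a <= n.+1)%N -> (0 < b <= n.+1)%N -> (0 < c <= n.+1)%N ->
  cyclic3 (cyc_succ n a) (cyc_succ n b) (cyc_succ n c) = cyclic3 a b c.
Proof.
move=> ? ? ?; rewrite /cyc_succ /cyclic3.
by case: (a =P n.+1); case: (b =P n.+1); case: (c =P n.+1) => ? ? ?; apply/idP/idP; lia.
Qed.

Lemma valid_pos_succ r c : valid_pos n r c -> valid_pos n (cyc_succ n r) (cyc_succ n c).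
Proof.
by case=> ? ? ?; rewrite /cyc_succ; case: (r =P n.+1); case: (c =P n.+1) => ? ?; split; lia.
Qed.

Lemma compat_cyclic_succ r1 c1 r2 c2 : valid_pos n r1 c1 -> valid_pos n r2 c2 ->
  compat_cyclic (cyc_succ n r1) (cyc_succ n c1) (cyc_succ n r2) (cyc_succ n c2) =
  compat_cyclic r1 c1 r2 c2.
Proof.
by case=> ? ? _ [? ? _]; rewrite /compat_cyclic /cyclic4 !cyclic3_succ // !eq_cyc_succ.
Qed.

Lemma entryE r c : entry n r c = vec_of n (entry_coord n r c).
Proof.
rewrite /entry /entry_coord; case: ifP => _; first by rewrite alphaE vec_ofN.
by case: ifP => _; rewrite !epsE ?vec_ofN vec_ofD.
Qed.

Lemma negsimple_entry i : - alpha n i = entry n 1 i.+2.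
Proof. by rewrite /entry eqxx subSS subSS subn0. Qed.

Lemma entry_inj_row1 r c c' : valid_pos n r c -> valid_pos n 1 c' ->
  entry n r c = entry n 1 c' -> r = 1%N /\ c = c'.
Proof.
move=> [/andP[? ?] /andP[? ?] ?] [_ /andP[? ?] ?]; rewrite !entryE => eq_e.
move: (vec_of_inj (c' - 2) eq_e) (vec_of_inj (c' - 1) eq_e).
by rewrite /entry_coord /alpha_coord /kron; case_lia.
Qed.

Lemma entry_inj_last_row r c c' : valid_pos n r c -> valid_pos n n.+1 c' ->
  entry n r c = entry n n.+1 c' -> r = n.+1 /\ c = c'.
Proof.
move=> [/andP[? ?] /andP[? ?] ?] [_ /andP[? ?] ?]; rewrite !entryE => eq_e.
move: (vec_of_inj n.-1 eq_e) (vec_of_inj (c' - 1) eq_e) (vec_of_inj (c - 2) eq_e).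
by rewrite /entry_coord /alpha_coord /kron; case_lia.
Qed.

Lemma tau_neg_imageE i : (i < n)%N -> tau_neg_image n i = entry n 2 (cyc_succ n i.+2).
Proof.
move=> lt_in; rewrite /tau_neg_image alphaE prodS_iota ?add0n // entryE.
apply: eq_vec_of => k _.
by rewrite /cycle_up /cyc_succ /entry_coord /alpha_coord /kron; case_lia.
Qed.

Lemma tau_neg_preimageE i : (i < n)%N -> tau_neg_preimage n i = entry n n.+1 i.+1.
Proof.
move=> lt_in; rewrite /tau_neg_preimage entryE.
have [lt_i1n|le_ni1] := ltnP i.+1 n; last first.
  rewrite (_ : n - i.+1 = 0)%N /= ?alphaE; last by lia.
  by apply: eq_vec_of => k _; rewrite /entry_coord /alpha_coord /kron; case_lia.
have iota_split : iota i.+1 (n - i.+1) = iota i.+1 (n - i.+2) ++ [:: (i.+1 + (n - i.+2))%N].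
  by rewrite (_ : n - i.+1 = n - i.+2 + 1)%N ?iotaD //; lia.
rewrite iota_split rev_cat /= alphaE -/(prodS _ _ _) prodS_rev_iota; last by lia.
rewrite srefl_last; last by lia.
apply: eq_vec_of => k _.
by rewrite /cycle_down /negate_at /entry_coord /alpha_coord /kron; case_lia.
Qed.

Lemma tau_entry r c : (0 < n)%N -> valid_pos n r c ->
  tau n (entry n r c) = entry n (cyc_succ n r) (cyc_succ n c).
Proof.
move=> n_gt0 vrc; have [/andP[? ?] /andP[? ?] ?] := vrc.
rewrite /tau; case: pickP => [i /eqP | no_neg].
  rewrite negsimple_entry => /entry_inj_row1 -[//| |-> ->].
    by have := ltn_ord i; split; lia.
  by rewrite tau_neg_imageE ?(cyc_succE 1).
have r_ne1 : r <> 1%N.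
  move=> r1; have lt_cn : (c - 2 < n)%N by lia.
  move: (no_neg (Ordinal lt_cn)).
  by rewrite negsimple_entry r1 (_ : (c - 2).+2 = c) ?eqxx //; lia.
case: pickP => [i /eqP | no_pre].
  rewrite tau_neg_preimageE // => /entry_inj_last_row -[//| |-> ->].
    by have := ltn_ord i; split; lia.
  by rewrite negsimple_entry cyc_succ_last cyc_succE.
have r_ne_last : r <> n.+1.
  move=> rN; have lt_cn : (c - 1 < n)%N by lia.
  move: (no_pre (Ordinal lt_cn)).
  by rewrite tau_neg_preimageE // rN (_ : (c - 1).+1 = c) ?eqxx //; lia.
rewrite !entryE cox_vec_of //.
apply: eq_vec_of => k lt_kn.
by rewrite /cyc_succ /entry_coord /alpha_coord /kron; case_lia.
Qed.

Lemma sum_alpha (cf : nat -> int) :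
  \sum_(k < n) alpha n k *~ cf k =
  vec_of n (fun j => (if (j.+1 < n)%N then cf j else cf j *+ 2)
                     - (if (0 < j)%N then cf j.-1 else 0)).
Proof.
apply/ffunP => j; rewrite sum_ffunE vec_ofE; have lt_jn := ltn_ord j.
have term (k : 'I_n) : (alpha n k *~ cf k) j =
    cf k * (if (j.+1 < n)%N then 1 else 2) * kron k j
    - (if (0 < j)%N then cf k * kron k j.-1 else 0).
  by rewrite ffunMzE alphaE vec_ofE mulrzz /alpha_coord /kron; case_lia.
rewrite (eq_bigr _ (fun k _ => term k)) sumrB (sum_kron n (fun k => cf k * _) j lt_jn).
case: (ltnP 0 j) => j_gt0; last by rewrite big1 //; case_lia.
by rewrite (sum_kron n cf j.-1); case_lia.
Qed.

Lemma entry_sum_alpha r c : valid_pos n r c -> r <> 1%N ->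
  entry n r c = \sum_(k < n) alpha n k *~ entry_coef n r c k.
Proof.
move=> [/andP[? ?] /andP[? ?] ?] ?; rewrite sum_alpha entryE.
by apply: eq_vec_of => k ?; rewrite /entry_coord /entry_coef /kron; case_lia.
Qed.

Lemma entry_posroot r c : valid_pos n r c -> r <> 1%N -> posroot n (entry n r c).
Proof.
move=> [/andP[? ?] /andP[? ?] ?] r_ne1; rewrite /posroot /entry (introF eqP r_ne1).
case: ifP => lt_rc.
  have lt_r : (r - 2 < n)%N by lia.
  have lt_c : (c - 2 < n)%N by lia.
  apply/orP; left; apply/existsP; exists (Ordinal lt_r); apply/existsP; exists (Ordinal lt_c).
  by rewrite /= eqxx andbT; lia.
have lt_c : (c - 1 < n)%N by lia.
have lt_r : (r - 2 < n)%N by lia.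
case: (ltnP (c - 1) (r - 2)) => lt_cr.
  apply/orP; left; apply/existsP; exists (Ordinal lt_c); apply/existsP; exists (Ordinal lt_r).
  by rewrite /= eqxx orbT lt_cr.
apply/orP; right; apply/existsP; exists (Ordinal lt_c) => /=.
by rewrite (_ : r - 2 = c - 1)%N ?mulr2n //; lia.
Qed.

Lemma entry_almpos r c : valid_pos n r c -> almpos n (entry n r c).
Proof.
move=> vrc; have [/andP[? ?] /andP[? ?] ?] := vrc.
case: (r =P 1%N) => [->|r_ne1]; last by rewrite /almpos entry_posroot.
have lt_c : (c - 2 < n)%N by lia.
by apply/orP; right; apply/existsP; exists (Ordinal lt_c); rewrite /entry eqxx.
Qed.

Lemma entry_coef_eq0 r c c' : valid_pos n r c -> valid_pos n 1 c' -> r <> 1%N ->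
  entry_coef n r c (c' - 2) = 0 <-> compat_cyclic 1 c' r c.
Proof.
move=> [/andP[? ?] /andP[? ?] ?] [_ /andP[? ?] ?] ?.
rewrite /entry_coef /compat_cyclic /cyclic4 /cyclic3; split; case_lia.
Qed.

Section CompatibilityDegree.
Variable f : vec n -> vec n -> int.
Hypothesis f_deg : is_compat_degree n f.

Lemma compat_degree_row1 c1 r2 c2 : valid_pos n 1 c1 -> valid_pos n r2 c2 ->
  f (entry n 1 c1) (entry n r2 c2) = 0 <-> compat_cyclic 1 c1 r2 c2.
Proof.
case: f_deg => _ f_negneg f_negpos v1 v2.
have [_ /andP[? ?] ?] := v1; have [/andP[? ?] /andP[? ?] ?] := v2.
have lt_c1 : (c1 - 2 < n)%N by lia.
have -> : entry n 1 c1 = - alpha n (Ordinal lt_c1) by rewrite /entry eqxx.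
case: (r2 =P 1%N) => [r2_1|r2_ne1].
  have lt_c2 : (c2 - 2 < n)%N by lia.
  have -> : entry n r2 c2 = - alpha n (Ordinal lt_c2) by rewrite r2_1 /entry eqxx.
  by rewrite f_negneg r2_1 /compat_cyclic eqxx.
rewrite (f_negpos _ _ (fun k => entry_coef n r2 c2 k)) ?entry_posroot ?entry_sum_alpha //.
exact: entry_coef_eq0.
Qed.

Hypothesis n_gt0 : (0 < n)%N.

Lemma compat_degree_succ r1 c1 r2 c2 : valid_pos n r1 c1 -> valid_pos n r2 c2 ->
  f (entry n (cyc_succ n r1) (cyc_succ n c1)) (entry n (cyc_succ n r2) (cyc_succ n c2)) =
  f (entry n r1 c1) (entry n r2 c2).
Proof.
case: f_deg => f_tau _ _ v1 v2.
by rewrite -!tau_entry // f_tau ?entry_almpos.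
Qed.

Lemma compat_degree_entry r1 c1 r2 c2 : valid_pos n r1 c1 -> valid_pos n r2 c2 ->
  f (entry n r1 c1) (entry n r2 c2) = 0 <-> compat_cyclic r1 c1 r2 c2.
Proof.
move rows_left: (n.+1 - r1)%N => k.
elim: k r1 c1 r2 c2 rows_left => [|k IH] r1 c1 r2 c2 rows_left v1 v2.
  have r1_last : r1 = n.+1 by case: v1 => /andP[? ?] _ _; lia.
  have v1' := valid_pos_succ r1 c1 v1; rewrite r1_last cyc_succ_last in v1'.
  rewrite -compat_degree_succ // -compat_cyclic_succ // r1_last cyc_succ_last.
  by apply: compat_degree_row1 => //; apply: valid_pos_succ.
case: (r1 =P 1%N) => [r1_1|r1_ne1]; first by subst; apply: compat_degree_row1.
rewrite -compat_degree_succ // -compat_cyclic_succ //.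
apply: IH; try exact: valid_pos_succ.
by rewrite cyc_succE; lia.
Qed.

End CompatibilityDegree.
End ArrayEntries.

Theorem theorem4p6 (n : nat) (hn : (1 <= n)%N) (f : vec n -> vec n -> int)
  (hf : is_compat_degree n f) (r1 c1 r2 c2 : nat) :
  valid_pos n r1 c1 -> valid_pos n r2 c2 ->
  (f (entry n r1 c1) (entry n r2 c2) = 0 <->
   cond_i r1 c1 r2 c2 \/ cond_ii r1 c1 r2 c2 \/ cond_iii r1 c1 r2 c2).
Proof.
move=> v1 v2; rewrite conds_compat_cyclic.
exact: compat_degree_entry.
Qed.
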